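(* Suppose we have $n\ge3$ agents with additive, identical, normalized valuations, provided with a $2$-value prediction of accuracy $\eta<1-\frac{2(1-a^2)}{4+(2n-3)a}$ for some given $a\in(0,1]$; that is, the allowed error between the prediction and the true valuation is $1-\eta>\frac{2(1-a^2)}{4+(2n-3)a}$. Then there is no online algorithm that guarantees an $a$-EFX allocation for all instances with error at most $1-\eta$, even when $T'=T=2n-1$.
   Context: Online fair division with predictions and identical valuations: agents $[n]$; goods $g_1,\dots,g_T$ arrive one per time step; all agents share a true additive normalized valuation $v$ ($v(g_t)\ge0$, $\sum_{t\in[T]}v(g_t)=1$, $v(S)=\sum_{g\in S}v(g)$), and before any arrival the algorithm receives a prediction $p=(p(g_1),\dots,p(g_{T'}))$ (an additive normalized valuation over $T'$ predicted goods) and the accuracy level. A $2$-value prediction takes at most $2$ distinct values. Error $\frac12\sum_{t=1}^{\max\{T,T'\}}|p(g_t)-v(g_t)|$ (missing entries set to $0$); accuracy $\eta$ means the error is at most $1-\eta$. At time $t$, $v(g_t)$ is revealed and $g_t$ must be irrevocably allocated. For $S\ne\emptyset$, $\bar S=S\setminus\{g\}$ with $g\in\arg\max_{g'\in S}v(S\setminus\{g'\})$, $\bar\emptyset=\emptyset$. An allocation is $a$-EFX if $v(A_i)\ge a\cdot v(\bar A_j)$ for all $i,j$. *)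

From HB Require Import structures.
From mathcomp Require Import all_boot all_order all_algebra.
From mathcomp Require Import reals.
Set Implicit Arguments. Unset Strict Implicit. Unset Printing Implicit Defensive.
Import Order.TTheory GRing.Theory Num.Theory.
Local Open Scope ring_scope.

Section OnlineFD.
Variable R : realType.

Definition vset (T : nat) (v : 'I_T -> R) (S : {set 'I_T}) : R :=
  \sum_(g in S) v g.

Definition normalized (T : nat) (v : 'I_T -> R) : Prop :=
  (forall t, 0 <= v t) /\ \sum_(t < T) v t = 1.

Definition two_value (T : nat) (p : 'I_T -> R) : Prop :=
  exists x y : R, forall t, p t = x \/ p t = y.

Definition pred_error (T : nat) (p v : 'I_T -> R) : R :=
  (\sum_(t < T) `|p t - v t|) / 2.

(* S-bar: S minus a good g maximizing v(S \ {g}); empty set stays empty *)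
Definition sbar (T : nat) (v : 'I_T -> R) (S : {set 'I_T}) : {set 'I_T} :=
  match [pick g in S] with
  | Some g0 => S :\ ([arg max_(g > g0 in S) vset v (S :\ g)])%O
  | None => set0
  end.

Definition aEFX (n T : nat) (v : 'I_T -> R) (a : R) (A : 'I_n -> {set 'I_T}) : Prop :=
  forall i j : 'I_n, vset v (A i) >= a * vset v (sbar v (A j)).

(* A deterministic online algorithm: given the prediction p (over T' = T
   predicted goods) and the sequence of values revealed so far
   v(g_1),...,v(g_t) (including the current good), it returns the agent
   receiving the current good g_t. *)
Definition online_alg (n T : nat) := ('I_T -> R) -> seq R -> 'I_n.

Definition prefix (T : nat) (v : 'I_T -> R) (t : 'I_T) : seq R :=
  [seq v s | s <- enum 'I_T & (nat_of_ord s <= nat_of_ord t)%N].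

Definition run (n T : nat) (alg : online_alg n T) (p v : 'I_T -> R) (t : 'I_T) : 'I_n :=
  alg p (prefix v t).

Definition bundles (n T : nat) (alg : online_alg n T) (p v : 'I_T -> R) : 'I_n -> {set 'I_T} :=
  fun i => [set t | run alg p v t == i].

End OnlineFD.

From HB Require Import structures.
From mathcomp Require Import all_boot all_order all_algebra.
From mathcomp Require Import reals.
From mathcomp Require Import zify lra.
Set Implicit Arguments.
Unset Strict Implicit.
Unset Printing Implicit Defensive.
Import Order.TTheory GRing.Theory Num.Theory.
Local Open Scope ring_scope.

(* With K = 2n - 3 and u = 1 / (4 + K a), the adversary fixes the prediction
   giving the K first goods value a u and the last two value 2 u, and plays one
   of two true valuations that agree on the first K goods, so that an online
   algorithm allocates these goods identically in both runs.  In the first one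
   the small goods are worth s slightly below a u and the two big goods beta
   slightly above 2 u, with 2 s < a beta: a-EFX then forces each big good to be
   alone in its bundle, so the K = 2n - 3 small goods go to the other n - 2
   agents and one of them receives at least three.  In the second one the
   penultimate good is worth only x slightly below 2 a s; the owner of a big good
   in the first run that does not receive the last good then holds at most x,
   less than a times the value 2 s of that crowded bundle minus one good.  The
   bound on eta leaves room for both valuations within the allowed error. *)

Section Valuations.
Variables (R : realType) (T : nat) (v : 'I_T -> R).
Hypothesis v_ge0 : forall t, 0 <= v t.

Lemma subset_le_vset (A B : {set 'I_T}) : A \subset B -> vset v A <= vset v B.
Proof.
move=> AB; rewrite /vset [X in _ <= X](big_setID A) /= (setIidPr AB) lerDl.
exact: sumr_ge0.
Qed.

Lemma mem_le_vset (S : {set 'I_T}) g : g \in S -> v g <= vset v S.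
Proof.
move=> gS; have <- : vset v [set g] = v g by rewrite /vset big_set1.
by apply: subset_le_vset; rewrite sub1set.
Qed.

Lemma pair_le_vset (S : {set 'I_T}) g h :
  g != h -> g \in S -> h \in S -> v g + v h <= vset v S.
Proof.
move=> gh gS hS; rewrite /vset (big_setD1 g gS) lerD2l.
by apply: mem_le_vset; rewrite in_setD1 eq_sym gh.
Qed.

Lemma card_le_vset (S : {set 'I_T}) c :
  (forall t, t \in S -> c <= v t) -> #|S|%:R * c <= vset v S.
Proof. by move=> Sc; rewrite mulr_natl -sumr_const; apply: ler_sum. Qed.

Lemma vset_setD1_le_sbar (S : {set 'I_T}) g :
  g \in S -> vset v (S :\ g) <= vset v (sbar v S).
Proof.
move=> gS; rewrite /sbar; case: pickP => [g0 g0S|/(_ g)]; last by rewrite gS.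
by case: arg_maxP => // i _; apply.
Qed.

Lemma card_le_vset_sbar (S S' : {set 'I_T}) c :
  S' \subset S -> (forall t, t \in S' -> c <= v t) ->
  (#|S'|.-1)%:R * c <= vset v (sbar v S).
Proof.
move=> S'S S'c; have [S'0|[g gS']] := set_0Vmem S'.
  by rewrite S'0 cards0 mul0r /vset sumr_ge0.
apply: le_trans _ (vset_setD1_le_sbar (subsetP S'S g gS')).
rewrite (cardsD1 g S') gS' /=; apply: le_trans _ (subset_le_vset (setSD _ S'S)).
by apply: card_le_vset => t /setD1P [_ /S'c].
Qed.

Lemma aEFX_le_vset (n : nat) (a b : R) (A : 'I_n -> {set 'I_T}) (i j : 'I_n) :
  aEFX v a A -> 0 <= a -> b <= vset v (sbar v (A j)) -> a * b <= vset v (A i).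
Proof. by move=> EF a0 bj; apply: le_trans _ (EF i j); apply: ler_wpM2l. Qed.

End Valuations.

Lemma sum_ge_compl (R : realType) (I : finType) (J : {set I}) (F : I -> R) c :
  (forall i, i \notin J -> c <= F i) ->
  \sum_(i in J) F i + (#|I|%:R - #|J|%:R) * c <= \sum_i F i.
Proof.
have <- : #|~: J|%:R = #|I|%:R - #|J|%:R :> R.
  by rewrite -(cardsC J) natrD addrAC subrr add0r.
move=> Fc; rewrite [X in _ <= X](bigID (mem J)) /= lerD2l mulr_natl -sumr_const.
rewrite [X in X <= _](eq_bigl (fun i => i \notin J)) => [|i]; last by rewrite inE.
exact: ler_sum.
Qed.

Lemma pigeonhole_sum (I : finType) (A : {pred I}) (F : I -> nat) (c : nat) :
  (#|A| * c < \sum_(i in A) F i)%N -> exists2 i, i \in A & (c < F i)%N.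
Proof.
move=> lt_sum; apply/exists_inP; apply: contraLR lt_sum => /exists_inPn le_c.
by rewrite -leqNgt -sum_nat_const leq_sum // => i /le_c; rewrite -leqNgt.
Qed.

Section Online.
Variables (R : realType) (n T : nat) (alg : online_alg R n T) (p v : 'I_T -> R).

Lemma run_prefix_eq (w : 'I_T -> R) (t : 'I_T) :
  (forall s : 'I_T, (s <= t)%N -> v s = w s) -> run alg p v t = run alg p w t.
Proof.
move=> vw; rewrite /run /prefix; congr (alg _ _).
by apply/eq_in_map => s; rewrite mem_filter => /andP [/vw].
Qed.

Lemma mem_bundles (i : 'I_n) (t : 'I_T) :
  (t \in bundles alg p v i) = (run alg p v t == i).
Proof. by rewrite inE. Qed.

Lemma sum_vset_bundles : \sum_i vset v (bundles alg p v i) = \sum_t v t.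
Proof.
rewrite (partition_big (run alg p v) xpredT) //=; apply: eq_bigr => i _.
by apply: eq_bigl => t; rewrite mem_bundles.
Qed.

Lemma sum_card_bundles : (\sum_i #|bundles alg p v i| = T)%N.
Proof.
rewrite -[X in (_ = X)%N]card_ord -sum1_card (partition_big (run alg p v) xpredT) //=.
by apply: eq_bigr => i _; rewrite sum1_card; apply: eq_card => t; rewrite mem_bundles.
Qed.

End Online.

Definition ord_penult {K : nat} : 'I_K.+2 := Ordinal (leqnSn K.+1).

Section Profile.
Variables (R : realType) (K : nat).

Lemma ord_penult_neq_max : ord_penult != ord_max :> 'I_K.+2.
Proof. by rewrite -val_eqE /= ltn_eqF. Qed.

Lemma ord_split3 (t : 'I_K.+2) : [\/ (t < K)%N, t = ord_penult | t = ord_max].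
Proof.
have [tK|Kt] := ltnP t K; first exact: Or31.
have : (t == K :> nat) || (t == K.+1 :> nat) by have := ltn_ord t; lia.
by case/orP => /eqP tE; [apply: Or32 | apply: Or33]; apply: val_inj.
Qed.

Lemma exists_big_neq (b : 'I_K.+2) : exists2 b' : 'I_K.+2, (K <= b')%N & b' != b.
Proof.
have [->|bmax] := eqVneq b ord_max; last by exists ord_max; [exact: leqnSn | rewrite eq_sym].
by exists ord_penult; [exact: leqnn | exact: ord_penult_neq_max].
Qed.

Definition profile (c d e : R) (t : 'I_K.+2) : R :=
  if (t < K)%N then c else if t == ord_penult then d else e.

Lemma profile_lt (c d e : R) (t : 'I_K.+2) : (t < K)%N -> profile c d e t = c.
Proof. by rewrite /profile => ->. Qed.

Lemma profile_penult (c d e : R) : profile c d e ord_penult = d.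
Proof. by rewrite /profile ltnn eqxx. Qed.

Lemma profile_max (c d e : R) : profile c d e ord_max = e.
Proof. by rewrite /profile ltnNge leqnSn eq_sym (negPf ord_penult_neq_max). Qed.

Lemma profile_ge (c d : R) (t : 'I_K.+2) : (K <= t)%N -> profile c d d t = d.
Proof. by rewrite /profile leqNgt => /negPf ->; case: eqP. Qed.

Lemma sum_profile (c d e : R) : \sum_t profile c d e t = K%:R * c + d + e.
Proof.
rewrite !big_ord_recr /=.
have -> : widen_ord (leqnSn K.+1) ord_max = ord_penult by apply: val_inj.
rewrite profile_penult profile_max (eq_bigr (fun _ => c)) => [|t _]; last by rewrite /profile /= ltn_ord.
by rewrite sumr_const card_ord mulr_natl.
Qed.

Lemma normalized_profile (c d e : R) :
  0 <= c -> 0 <= d -> 0 <= e -> K%:R * c + d + e = 1 -> normalized (profile c d e).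
Proof.
move=> c0 d0 e0 sum1; split; last by rewrite sum_profile.
by move=> t; rewrite /profile; case: ifP => _ //; case: ifP.
Qed.

Lemma two_value_profile (c d : R) : two_value (profile c d d).
Proof. by exists c, d => t; rewrite /profile; case: ifP => _; [left | right; case: ifP]. Qed.

Lemma pred_error_profile (c d e c' d' e' : R) :
  pred_error (profile c d e) (profile c' d' e') =
  (K%:R * `|c - c'| + `|d - d'| + `|e - e'|) / 2.
Proof.
rewrite /pred_error -sum_profile; congr (_ / 2); apply: eq_bigr => t _.
by rewrite /profile; case: ifP => _ //; case: ifP.
Qed.

End Profile.

Section Adversary.
Variables (R : realType) (n K : nat) (a s beta x : R).
Hypotheses (n_ge3 : (3 <= n)%N) (K_n : (K + 3 = 2 * n)%N).
Hypotheses (a_gt0 : 0 < a) (a_le1 : a <= 1) (s_gt0 : 0 < s).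
Hypotheses (x_ge0 : 0 <= x) (x_lt : x < 2 * a * s) (s_lt_beta : 2 * s < a * beta).
Hypothesis total1 : K%:R * s + 2 * beta = 1.
Variables (alg : online_alg R n K.+2) (p : 'I_K.+2 -> R).

Local Notation v1 := (@profile R K s beta beta).
Local Notation v2 := (@profile R K s x (2 * beta - x)).
Local Notation owner1 := (run alg p v1).
Local Notation A1 := (bundles alg p v1).
Local Notation A2 := (bundles alg p v2).
Local Notation big_owners := [set owner1 ord_penult; owner1 ord_max].

(* [lra] ignores section hypotheses, hence the explicit [move:] before each call. *)
Let beta_gt_s : s < beta.
Proof.
have beta_gt0 : 0 < beta.
  by rewrite -(pmulr_rgt0 _ a_gt0); apply: lt_trans s_lt_beta; rewrite mulr_gt0.
have : a * beta <= beta by rewrite ler_piMl // ltW.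
move: s_lt_beta s_gt0; lra.
Qed.

Let v1_ge_s t : s <= v1 t.
Proof. by rewrite /profile; case: ifP => _ //; case: ifP => _; exact: ltW. Qed.

Let v1_ge0 t : 0 <= v1 t. Proof. exact: le_trans (ltW s_gt0) (v1_ge_s t). Qed.

Let v2_ge0 t : 0 <= v2 t.
Proof.
have : 0 <= (1 - a) * s by rewrite mulr_ge0 ?subr_ge0 // ltW.
move: beta_gt_s x_ge0 x_lt s_gt0.
by rewrite /profile; case: ifP => _; [|case: ifP => _]; lra.
Qed.

Let total_v1 : \sum_i vset v1 (A1 i) = 1.
Proof. by rewrite sum_vset_bundles sum_profile; move: total1; lra. Qed.

Let n_ge3R : 3 <= n%:R :> R. Proof. by rewrite (ler_nat R 3 n). Qed.

Let total_n : (2 * n%:R - 3) * s + 2 * beta = 1.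
Proof.
have nR : K%:R + 3 = 2 * n%:R :> R by rewrite -(natrM _ 2 n) -K_n natrD.
by rewrite -nR; move: total1; lra.
Qed.

Let small_goods_same_owner (t : 'I_K.+2) : (t < K)%N -> run alg p v2 t = owner1 t.
Proof.
move=> tK; apply: run_prefix_eq => u ut.
by rewrite !profile_lt //; apply: leq_ltn_trans ut tK.
Qed.

Hypothesis EFX1 : aEFX v1 a A1.

Let shared_big_good_lb (j : 'I_n) (b g : 'I_K.+2) :
  (K <= b)%N -> b \in A1 j -> g \in A1 j -> g != b ->
  forall i, a * beta <= vset v1 (A1 i).
Proof.
move=> Kb bj gj gb i; apply: aEFX_le_vset EFX1 (ltW a_gt0) _.
apply: le_trans _ (vset_setD1_le_sbar _ gj); rewrite -[X in X <= _](profile_ge s beta Kb).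
by apply: (mem_le_vset v1_ge0); rewrite in_setD1 eq_sym gb.
Qed.

Lemma big_good_alone (j : 'I_n) (b g : 'I_K.+2) :
  (K <= b)%N -> b \in A1 j -> g \in A1 j -> g = b.
Proof.
move=> Kb bj gj; apply/eqP/negPn/negP => gb.
have total_ge := sum_ge_compl (fun i _ => shared_big_good_lb Kb bj gj gb i).
have gap : 0 < (a * beta - 2 * s) * (n%:R - 2).
  by rewrite mulr_gt0 // subr_gt0 //; move: n_ge3R; lra.
have [b' Kb' b'b] := exists_big_neq b.
have b'A : b' \in A1 (owner1 b') by rewrite mem_bundles.
have v1b : v1 b = beta by rewrite profile_ge.
have v1b' : v1 b' = beta by rewrite profile_ge.
case: (eqVneq (owner1 b') j) => [b'j | jb'].
  have := total_ge [set j]; rewrite big_set1 cards1 card_ord total_v1.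
  have b'A' : b' \in A1 j by rewrite -b'j.
  have := pair_le_vset v1_ge0 b'b b'A' bj; rewrite v1b v1b'.
  by move: s_gt0 s_lt_beta total_n gap; lra.
have gb' : g != b'.
  by apply: contra_neq jb' => gE; move: gj; rewrite mem_bundles gE => /eqP.
have := total_ge [set owner1 b'; j].
rewrite big_setU1 ?big_set1 ?cards2 ?inE // jb' card_ord total_v1 /=.
have := mem_le_vset v1_ge0 b'A; have := pair_le_vset v1_ge0 gb gj bj.
have := v1_ge_s g; rewrite v1b v1b'.
by move: total_n gap; lra.
Qed.

Lemma bundle_big_good (b : 'I_K.+2) : (K <= b)%N -> A1 (owner1 b) = [set b].
Proof.
move=> Kb; apply/setP => g; rewrite in_set1; apply/idP/eqP => [gA | ->].
  by apply: big_good_alone Kb _ gA; rewrite mem_bundles.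
by rewrite mem_bundles.
Qed.

Lemma owner_big_goods (t : 'I_K.+2) : (owner1 t \in big_owners) = (K <= t)%N.
Proof.
have [tK|Kt] := ltnP t K; last first.
  by case: (ord_split3 t) => [|->|->]; rewrite ?inE ?eqxx ?orbT // ltnNge Kt.
have apart (b : 'I_K.+2) : (K <= b)%N -> owner1 t == owner1 b = false.
  move=> Kb; apply/negbTE/eqP => tb; have : t \in A1 (owner1 b) by rewrite mem_bundles tb.
  by rewrite bundle_big_good // inE => /eqP tE; move: tK; rewrite tE ltnNge Kb.
by rewrite !inE !apart /= ?leqnSn.
Qed.

Lemma owners_distinct : owner1 ord_penult != owner1 ord_max.
Proof.
apply/eqP => owner_eq.
have : (ord_max : 'I_K.+2) \in A1 (owner1 ord_penult) by rewrite mem_bundles owner_eq.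
by rewrite bundle_big_good // inE eq_sym (negbTE (ord_penult_neq_max K)).
Qed.

Lemma crowded_agent : exists2 i, i \notin big_owners & (2 < #|A1 i|)%N.
Proof.
have card_compl : (2 + #|~: big_owners| = n)%N.
  by have := cardsC big_owners; rewrite cards2 owners_distinct card_ord.
have : (\sum_(i in ~: big_owners) #|A1 i| = K)%N.
  have := sum_card_bundles alg p v1; rewrite (bigID (mem big_owners)) /=.
  rewrite big_setU1 ?inE ?owners_distinct //= big_set1.
  rewrite !bundle_big_good ?leqnn ?leqnSn // !cards1.
  rewrite (eq_bigl (fun i => i \in ~: big_owners)) => [|i]; last by rewrite in_setC.
  by move=> /eqP; rewrite -addnA !add1n !eqSS => /eqP.
move=> sum_compl; have [|i] := @pigeonhole_sum _ (~: big_owners) (fun i => #|A1 i|) 2.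
  by rewrite sum_compl; lia.
by rewrite inE; exists i.
Qed.

Lemma profiles_not_both_aEFX : ~ aEFX v2 a A2.
Proof.
move=> EFX2; have [i iJ crowded] := crowded_agent.
have Ai_small (t : 'I_K.+2) : t \in A1 i -> (t < K)%N.
  by rewrite mem_bundles => /eqP ti; rewrite ltnNge -owner_big_goods ti.
have [j jJ j_max] : exists2 j, j \in big_owners & j != run alg p v2 ord_max.
  case: (eqVneq (run alg p v2 ord_max) (owner1 ord_penult)) => [-> | ne].
    by exists (owner1 ord_max); rewrite ?inE ?eqxx ?orbT // eq_sym owners_distinct.
  by exists (owner1 ord_penult); rewrite ?inE ?eqxx // eq_sym.
have Aj_le : vset v2 (A2 j) <= x.
  have Aj_sub : A2 j \subset [set ord_penult].
    apply/subsetP => t; rewrite mem_bundles inE => /eqP tj.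
    case: (ord_split3 t) => [tK | -> | tmax] //.
      by move: jJ; rewrite -tj small_goods_same_owner // owner_big_goods leqNgt tK.
    by move: j_max; rewrite -tj tmax eqxx.
  apply: le_trans (subset_le_vset v2_ge0 Aj_sub) _.
  by rewrite /vset big_set1 profile_penult.
have Ai_ge : 2 * s <= vset v2 (sbar v2 (A2 i)).
  have sub : A1 i \subset A2 i.
    by apply/subsetP => t tA; rewrite mem_bundles small_goods_same_owner ?Ai_small // -mem_bundles.
  apply: le_trans _ (card_le_vset_sbar v2_ge0 sub (c := s) _).
    by rewrite ler_pM2r // (ler_nat R 2) ltn_predRL.
  by move=> t /Ai_small tK; rewrite profile_lt.
have := aEFX_le_vset j EFX2 (ltW a_gt0) Ai_ge.
by move: x_lt Aj_le; lra.
Qed.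

End Adversary.

Lemma perturbed_instance (R : realType) (K : nat) (a eta u d : R) :
  0 < a -> a <= 1 -> 0 < u -> K%:R * (a * u) + 4 * u = 1 ->
  0 < d -> d <= a ^+ 2 * u / 2 -> 2 * (1 - a ^+ 2) * u + (K%:R + 3) * d <= 1 - eta ->
  exists (p : 'I_K.+2 -> R) (s beta x : R),
    [/\ normalized p /\ two_value p,
        [/\ 0 < s, 0 <= x, x < 2 * a * s, 2 * s < a * beta & K%:R * s + 2 * beta = 1],
        normalized (@profile R K s beta beta) /\ pred_error p (profile s beta beta) <= 1 - eta
      & normalized (@profile R K s x (2 * beta - x)) /\
        pred_error p (profile s x (2 * beta - x)) <= 1 - eta].
Proof.
move=> a_gt0 a_le1 u_gt0 u_total d_gt0 d_le d_slack.
have au_le : a * u <= u by rewrite ler_piMl // ltW.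
have a2u_le : a ^+ 2 * u <= a * u by rewrite expr2 -mulrA ler_piMl // mulr_ge0 // ltW.
have a2u_gt0 : 0 < a ^+ 2 * u by rewrite mulr_gt0 // exprn_gt0.
have ad_le : a * d <= d by rewrite ler_piMl // ltW.
have ad_ge0 : 0 <= a * d by rewrite mulr_ge0 // ltW.
have Kd_ge0 : 0 <= K%:R * d by rewrite mulr_ge0 // ltW.
have aKd_ge0 : 0 <= a * (K%:R * d) by rewrite mulr_ge0 // ltW.
set s := a * u - d; set beta := 2 * u + K%:R * d / 2; set x := 2 * a * s - d.
have s_gt0 : 0 < s by rewrite /s; lra.
have x_ge0 : 0 <= x by rewrite /x /s; lra.
have x_le : x <= 2 * u by rewrite /x /s; lra.
have beta_ge2u : 2 * u <= beta by rewrite /beta; lra.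
have total : K%:R * s + 2 * beta = 1 by rewrite /s /beta; lra.
exists (profile (a * u) (2 * u) (2 * u)), s, beta, x; split.
- split; last exact: two_value_profile.
  by apply: normalized_profile; rewrite ?mulr_ge0 ?ltW //; lra.
- by split=> //; rewrite /x /s /beta; lra.
- split; first by apply: normalized_profile; lra.
  rewrite pred_error_profile /s /beta.
  have -> : a * u - (a * u - d) = d by lra.
  have -> : 2 * u - (2 * u + K%:R * d / 2) = - (K%:R * d / 2) by lra.
  rewrite normrN !ger0_norm; lra.
- split; first by apply: normalized_profile; lra.
  rewrite pred_error_profile.
  have -> : a * u - s = d by rewrite /s; lra.
  have -> : 2 * u - (2 * beta - x) = - (2 * u + K%:R * d - x) by rewrite /beta; lra.
  rewrite normrN !ger0_norm /x /s; lra.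
Qed.

Lemma hard_instance (R : realType) (K : nat) (a eta : R) :
  0 < a -> a <= 1 -> eta < 1 - 2 * (1 - a ^+ 2) / (4 + K%:R * a) ->
  exists (p : 'I_K.+2 -> R) (s beta x : R),
    [/\ normalized p /\ two_value p,
        [/\ 0 < s, 0 <= x, x < 2 * a * s, 2 * s < a * beta & K%:R * s + 2 * beta = 1],
        normalized (@profile R K s beta beta) /\ pred_error p (profile s beta beta) <= 1 - eta
      & normalized (@profile R K s x (2 * beta - x)) /\
        pred_error p (profile s x (2 * beta - x)) <= 1 - eta].
Proof.
move=> a_gt0 a_le1; set u := (4 + K%:R * a)^-1 => eta_lt.
have K_ge0 : 0 <= K%:R :> R by [].
have u_gt0 : 0 < u by rewrite invr_gt0; nra.
have u_total : K%:R * (a * u) + 4 * u = 1.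
  by rewrite mulrA -mulrDl addrC mulfV // gt_eqF //; nra.
set slack := 1 - eta - 2 * (1 - a ^+ 2) * u.
have slack_gt0 : 0 < slack by rewrite /slack; lra.
pose d := Num.min (a ^+ 2 * u / 2) (slack / (K%:R + 3)).
have d_gt0 : 0 < d by rewrite lt_min !divr_gt0 //; nra.
have d_le : d <= a ^+ 2 * u / 2 by rewrite ge_min lexx.
have d_slack : d * (K%:R + 3) <= slack.
  by rewrite -ler_pdivlMr ?ge_min ?lexx ?orbT //; lra.
apply: (perturbed_instance a_gt0 a_le1 u_gt0 u_total d_gt0 d_le).
by move: d_slack; rewrite /slack; lra.
Qed.

Theorem theorem4p17 (R : realType) (n : nat) (a eta : R) :
  (3 <= n)%N -> 0 < a -> a <= 1 ->
  eta < 1 - 2 * (1 - a ^+ 2) / (4 + (2 * n - 3)%:R * a) ->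
  ~ exists alg : online_alg R n (2 * n - 1),
      forall p v : 'I_(2 * n - 1) -> R,
        normalized p -> two_value p -> normalized v ->
        pred_error p v <= 1 - eta ->
        aEFX v a (bundles alg p v).
Proof.
move=> n_ge3 a_gt0 a_le1 eta_lt [alg alg_aEFX].
have K_n : ((2 * n - 3) + 3 = 2 * n)%N by lia.
move: alg alg_aEFX; have -> : (2 * n - 1 = (2 * n - 3).+2)%N by lia.
move: (2 * n - 3)%N K_n eta_lt => K K_n eta_lt alg alg_aEFX.
have [p [s [beta [x [[p_norm p_two] [s_gt0 x_ge0 x_lt s_beta total]
  [v1_norm err1] [v2_norm err2]]]]]] := hard_instance a_gt0 a_le1 eta_lt.
apply: (profiles_not_both_aEFX n_ge3 K_n a_gt0 a_le1 s_gt0 x_ge0 x_lt s_beta total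
  (alg := alg) (p := p)); by apply: alg_aEFX.
Qed.
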